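(* Let integers $n \geq 0$, $m \geq 1$ and $k \geq 1$ be given, and let $p=(p_1,\dots,p_m)$ be a probability distribution on $\{1,\dots,m\}$. Throw $n$ balls independently into $m$ bins, each ball landing in bin $i$ with probability $p_i$, and let $M_n$ be the maximum load of any bin after the $n$ balls are thrown. Then \[ \Pr[\mathrm{Bin}(n, \|p\|_k) \geq k] \;\leq\; \Pr[M_n \geq k] \;\leq\; \binom{n}{k}\|p\|_k^{k}, \] where $\|p\|_k = \left(\sum_{i=1}^m p_i^k\right)^{1/k}$.
   Context: $\mathrm{Bin}(n,\alpha)$ denotes a binomial random variable with $n$ trials and success probability $\alpha$. The load of a bin is the number of balls that landed in it. *)

From HB Require Import structures.
From mathcomp Require Import all_boot all_order all_algebra.
From mathcomp Require Import reals exp.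
Set Implicit Arguments. Unset Strict Implicit. Unset Printing Implicit Defensive.
Import Order.TTheory GRing.Theory Num.Theory.
Local Open Scope ring_scope.

(* Discrete model: an outcome of throwing n balls into m bins is a function
   f : 'I_n -> 'I_m (ball j lands in bin f j); balls are independent, so
   outcome f has probability prod_j p (f j). *)

Definition load (n m : nat) (f : {ffun 'I_n -> 'I_m}) (i : 'I_m) : nat :=
  #|[set j | f j == i]|.

Definition maxload (n m : nat) (f : {ffun 'I_n -> 'I_m}) : nat :=
  (\max_(i < m) load f i)%N.

Definition outcome_prob (R : realType) (n m : nat) (p : 'I_m -> R)
  (f : {ffun 'I_n -> 'I_m}) : R := \prod_(j < n) p (f j).

Definition prob_maxload_ge (R : realType) (n m : nat) (p : 'I_m -> R) (k : nat) : R :=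
  \sum_(f : {ffun 'I_n -> 'I_m} | (k <= maxload f)%N) outcome_prob p f.

Definition binom_tail_ge (R : realType) (n : nat) (a : R) (k : nat) : R :=
  \sum_(k <= j < n.+1) ('C(n, j))%:R * a ^+ j * (1 - a) ^+ (n - j).

Definition knorm (R : realType) (m : nat) (p : 'I_m -> R) (k : nat) : R :=
  powR (\sum_(i < m) p i ^+ k) (k%:R)^-1.

From mathcomp Require Import all_boot all_order all_algebra.
From mathcomp Require Import reals exp.
From mathcomp Require Import zify ring lra.
Set Implicit Arguments. Unset Strict Implicit. Unset Printing Implicit Defensive.
Import Order.TTheory GRing.Theory Num.Theory.
Local Open Scope ring_scope.

(* The upper bound is a union bound over the k-subsets of balls and the bin
   that receives all of them.

   For the lower bound, let e_{<r}(x) be the exponential series truncated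
   below degree r.  The probability that every load stays below k is
   n! [X^n] prod_i e_{<k}(p_i X).  Two truncated factors merge,
   e_{<k}(xX) e_{<k}(yX) <= e_{<k}(cX) e^{(x+y-c)X} coefficientwise when
   c^k = x^k + y^k: after scaling by (x+y)^t this says
   Pr[X < k, t - X < k] <= Pr[Bin(t, c/(x+y)) < k] for X ~ Bin(t, x/(x+y)).
   Merging all m bins leaves e_{<k}(cX) e^{(1-c)X} with c = ||p||_k, whose
   n-th coefficient is n!^-1 Pr[Bin(n, c) < k]. *)

Section BinomialSums.
Variable R : realFieldType.
Implicit Types (v w x y c : R) (k t j : nat).

Definition binom_term t j v w : R := 'C(t, j)%:R * v ^+ j * w ^+ (t - j).

Definition binom_head k t v w : R := \sum_(j < k) binom_term t j v w.

Lemma binom_term_ge0 t j v w : 0 <= v -> 0 <= w -> 0 <= binom_term t j v w.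
Proof. by move=> v0 w0; rewrite !mulr_ge0 ?exprn_ge0. Qed.

Lemma binom_term_eq0 t j v w : (t < j)%N -> binom_term t j v w = 0.
Proof. by move=> ltj; rewrite /binom_term bin_small // !mul0r. Qed.

Lemma binom_term_rev t j v w : (j <= t)%N ->
  binom_term t (t - j) w v = binom_term t j v w.
Proof. by move=> lejt; rewrite /binom_term bin_sub // subKn // mulrAC. Qed.

Lemma binom_termSS t j v w :
  binom_term t.+1 j.+1 v w = w * binom_term t j.+1 v w + v * binom_term t j v w.
Proof.
rewrite /binom_term binS natrD subSS.
have [ltj|lejt] := ltnP t j.+1; first by rewrite bin_small // exprS; ring.
by rewrite (_ : t - j = (t - j.+1).+1)%N ?exprS; [ring | lia].
Qed.

Lemma exprD_binom_term t v w : (v + w) ^+ t = \sum_(j < t.+1) binom_term t j v w.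
Proof.
by rewrite addrC exprDn; apply: eq_bigr => j _; rewrite /binom_term -mulr_natl; ring.
Qed.

Lemma binom_headE k t v w :
  binom_head k t v w = \sum_(j < t.+1 | (j < k)%N) binom_term t j v w.
Proof.
pose F j := binom_term t j v w; rewrite /binom_head.
have [lekt|ltt] := leqP k t.+1; first exact: (big_ord_widen _ F lekt).
rewrite [RHS](eq_bigl xpredT) => [|j]; last exact: ltn_trans (ltn_ord j) ltt.
rewrite (big_ord_widen _ F (ltnW ltt)) [LHS](bigID (fun j : 'I_k => j < t.+1)%N) /=.
rewrite [X in _ + X]big1 ?addr0 // => j; rewrite -leqNgt; exact: binom_term_eq0.
Qed.

Lemma binom_head_add_tail k t v w :
  binom_head k t v w + \sum_(k <= j < t.+1) binom_term t j v w = (v + w) ^+ t.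
Proof.
rewrite exprD_binom_term binom_headE big_geq_mkord [RHS](bigID (fun j : 'I_t.+1 => j < k)%N).
by congr (_ + _); apply: eq_bigl => j; rewrite leqNgt.
Qed.

Lemma binom_head0 k v w : (0 < k)%N -> binom_head k 0 v w = 1.
Proof.
by move=> k_gt0; rewrite binom_headE big_mkcond big_ord1 /= k_gt0 /binom_term !expr0 !mulr1.
Qed.

Lemma binom_headS k t v w : (0 < k)%N ->
  binom_head k t.+1 v w =
  (v + w) * binom_head k t v w - 'C(t, k.-1)%:R * v ^+ k * w ^+ (t.+1 - k).
Proof.
case: k => // k _; rewrite /binom_head big_ord_recl /=.
under eq_bigr do rewrite binom_termSS.
rewrite big_split -!mulr_sumr /= mulrDl {1}big_ord_recr {1}big_ord_recl /=.
by rewrite /binom_term !bin0 !subn0 subSS !exprS; ring.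
Qed.

(* [kth_success_weight k s w t = \sum_(i < t) 'C(i, k.-1) w ^+ (i.+1 - k) s ^+ (t.-1 - i)]:
   splitting [Bin(t) >= k] according to the trial [i.+1] of the [k]-th success. *)
Fixpoint kth_success_weight k (s w : R) t : R :=
  if t is t'.+1 then s * kth_success_weight k s w t' + 'C(t', k.-1)%:R * w ^+ (t'.+1 - k)
  else 0.

Lemma binom_tail_factor k t v w : (0 < k)%N ->
  (v + w) ^+ t - binom_head k t v w = v ^+ k * kth_success_weight k (v + w) w t.
Proof.
move=> k_gt0; elim: t => [|t IH]; first by rewrite binom_head0 // expr0 subrr mulr0.
rewrite binom_headS //= exprS.
have -> : binom_head k t v w = (v + w) ^+ t - v ^+ k * kth_success_weight k (v + w) w t.
  by rewrite -IH; ring.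
ring.
Qed.

Lemma kth_success_weight_le k s w w' t : 0 <= s -> 0 <= w -> w <= w' ->
  kth_success_weight k s w t <= kth_success_weight k s w' t.
Proof.
move=> s0 w0 lew; elim: t => [|t IH] //=.
rewrite lerD ?ler_wpM2l ?ler0n // lerXn2r // ?inE ?nnegrE //.
exact: le_trans lew.
Qed.

Lemma exprD_ge_addX k x y : (0 < k)%N -> 0 <= x -> 0 <= y ->
  x ^+ k + y ^+ k <= (x + y) ^+ k.
Proof.
case: k => // k _ x0 y0; rewrite !exprS mulrDl.
by rewrite lerD // ler_wpM2l // lerXn2r // ?inE ?nnegrE ?addr_ge0 // ?lerDl ?lerDr.
Qed.

Lemma sumX_le_exprsum (I : finType) (F : I -> R) k : (0 < k)%N ->
  (forall i, 0 <= F i) -> \sum_i F i ^+ k <= (\sum_i F i) ^+ k.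
Proof.
move=> k_gt0 F0; suff [] : \sum_i F i ^+ k <= (\sum_i F i) ^+ k /\ 0 <= \sum_i F i by [].
apply: (big_rec2 (fun a b => a <= b ^+ k /\ 0 <= b)) => [|i a b _ [ab b0]].
  by rewrite expr0n eqn0Ngt k_gt0.
split; last by rewrite addr_ge0.
by apply: le_trans (exprD_ge_addX k_gt0 (F0 i) b0); rewrite lerD2l.
Qed.

Lemma root_sum_bounds k x y c : (0 < k)%N -> 0 <= x -> 0 <= y -> 0 <= c ->
  c ^+ k = x ^+ k + y ^+ k -> [/\ x <= c, y <= c & c <= x + y].
Proof.
move=> k_gt0 x0 y0 c0 ck.
have leX a b : 0 <= a -> 0 <= b -> a ^+ k <= b ^+ k -> a <= b.
  by move=> a0 b0; rewrite ler_pXn2r.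
split; apply: leX; rewrite ?addr_ge0 // ck ?lerDl ?lerDr ?exprn_ge0 //.
exact: exprD_ge_addX.
Qed.

Lemma binom_two_sided_head k t x y : (t.+1 < k + k)%N ->
  \sum_(j < t.+1 | ((j < k) && (t - j < k))%N) binom_term t j x y =
  binom_head k t x y + binom_head k t y x - (x + y) ^+ t.
Proof.
move=> ltt.
have headxy : binom_head k t x y =
    \sum_(j < t.+1 | ((j < k) && (t - j < k))%N) binom_term t j x y +
    \sum_(j < t.+1 | (k <= t - j)%N) binom_term t j x y.
  rewrite binom_headE (bigID (fun j : 'I_t.+1 => t - j < k)%N) /=; congr (_ + _).
  by apply: eq_bigl => j; apply/idP/idP; lia.
have tailyx : \sum_(j < t.+1 | (k <= t - j)%N) binom_term t j x y =
    \sum_(j < t.+1 | (k <= j)%N) binom_term t j y x.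
  rewrite (reindex_inj rev_ord_inj) /=; apply: eq_big => j; rewrite subSS.
    by rewrite subKn // -ltnS.
  by move=> _; rewrite binom_term_rev // -ltnS.
have sumyx : (x + y) ^+ t = binom_head k t y x + \sum_(j < t.+1 | (k <= j)%N) binom_term t j y x.
  rewrite addrC exprD_binom_term binom_headE (bigID (fun j : 'I_t.+1 => j < k)%N) /=.
  by under [X in _ + X = _]eq_bigl do rewrite -leqNgt.
by rewrite headxy tailyx sumyx; ring.
Qed.

Lemma binom_two_sided_le_head k t x y c : (0 < k)%N -> 0 <= x -> 0 <= y -> 0 <= c ->
  c ^+ k = x ^+ k + y ^+ k ->
  \sum_(j < t.+1 | ((j < k) && (t - j < k))%N) binom_term t j x y <=
  binom_head k t c (x + y - c).
Proof.
move=> k_gt0 x0 y0 c0 ck; have [xc yc cxy] := root_sum_bounds k_gt0 x0 y0 c0 ck.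
have d0 : 0 <= x + y - c by rewrite subr_ge0.
have [lett|ltt] := leqP (k + k) t.+1.
  rewrite big_pred0 => [|[j ltj] /=]; first by apply: sumr_ge0 => j _; exact: binom_term_ge0.
  by apply/negbTE/negP => /andP[]; lia.
rewrite binom_two_sided_head //.
(* By [binom_tail_factor] both sides are (x + y)^t minus tails v^k W(w), where
   W = [kth_success_weight k (x + y) _] is monotone:
   c^k W(x + y - c) = (x^k + y^k) W(x + y - c) <= x^k W(y) + y^k W(x). *)
have s0 : 0 <= x + y by rewrite addr_ge0.
have dx : x + y - c <= x by lra.
have dy : x + y - c <= y by lra.
have : c ^+ k * kth_success_weight k (x + y) (x + y - c) t <=
       x ^+ k * kth_success_weight k (x + y) y t + y ^+ k * kth_success_weight k (x + y) x t.
  by rewrite ck mulrDl lerD // ler_wpM2l ?exprn_ge0 // kth_success_weight_le.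
have := binom_tail_factor t c (x + y - c) k_gt0.
have := binom_tail_factor t x y k_gt0.
have := binom_tail_factor t y x k_gt0.
rewrite (addrC y x) (addrC c) subrK.
lra.
Qed.
End BinomialSums.

Section DerivProd.
Variable R : comNzRingType.

Lemma deriv_prod_seq (I : eqType) (r : seq I) (Q : I -> {poly R}) : uniq r ->
  (\prod_(i <- r) Q i)^`() = \sum_(i <- r) (Q i)^`() * \prod_(j <- r | j != i) Q j.
Proof.
elim: r => [|a r IH] /=; first by rewrite !big_nil -polyC1 derivC.
move=> /andP[ar ur]; rewrite !big_cons derivM IH // eqxx /= mulr_sumr.
have -> : \prod_(j <- r | j != a) Q j = \prod_(j <- r) Q j.
  rewrite -big_filter (_ : [seq j <- r | j != a] = r) //.
  by apply/all_filterP/allP => j jr; apply: contraNneq ar => <-.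
congr (_ + _); apply: eq_big_seq => i ir.
have ai : a != i by apply: contraNneq ar => ->.
by rewrite big_cons ai mulrCA.
Qed.

Lemma deriv_prod (I : finType) (Q : I -> {poly R}) :
  (\prod_i Q i)^`() = \sum_i (Q i)^`() * \prod_(j | j != i) Q j.
Proof. exact/deriv_prod_seq/index_enum_uniq. Qed.

End DerivProd.

Section TruncatedExponential.
Variable R : realFieldType.
Implicit Types (x y c u v : R) (P Q : {poly R}).

Definition trunc_exp r x : {poly R} := \poly_(j < r) (x ^+ j / j`!%:R).

Lemma coef_trunc_exp r x j :
  (trunc_exp r x)`_j = if (j < r)%N then x ^+ j / j`!%:R else 0.
Proof. exact: coef_poly. Qed.

Lemma natr_fact_neq0 n : n`!%:R != 0 :> R.
Proof. by rewrite pnatr_eq0 -lt0n fact_gt0. Qed.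

Lemma trunc_exp0 r : (0 < r)%N -> trunc_exp r 0 = 1.
Proof.
move=> r_gt0; apply/polyP => -[|j]; rewrite coef_trunc_exp coef1 /=.
  by rewrite r_gt0 expr0 fact0 divr1.
by rewrite expr0n mul0r if_same.
Qed.

Lemma deriv_trunc_exp r x : (trunc_exp r x)^`() = x *: trunc_exp r.-1 x.
Proof.
apply/polyP => j; rewrite coef_deriv coefZ !coef_trunc_exp.
case: r => [|r] /=; first by rewrite mul0rn mulr0.
rewrite ltnS; case: ifP => _; last by rewrite mul0rn mulr0.
rewrite factS natrM -mulr_natr exprS; field.
by rewrite natr_fact_neq0 nat1r pnatr_eq0.
Qed.

Lemma coef_trunc_expM r r' x y t :
  t`!%:R * (trunc_exp r x * trunc_exp r' y)`_t =
  \sum_(j < t.+1 | ((j < r) && (t - j < r'))%N) binom_term t j x y.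
Proof.
rewrite coefM mulr_sumr [RHS]big_mkcond; apply: eq_bigr => j _; rewrite !coef_trunc_exp.
case: (j < r)%N; case: (t - j < r')%N; rewrite ?mul0r ?mulr0 //=.
rewrite -(bin_fact (ltn_ord j : j <= t)%N) !natrM /binom_term; field.
by rewrite !natr_fact_neq0.
Qed.

Lemma coef_trunc_expMD N t u v : (t <= N)%N ->
  (trunc_exp N.+1 u * trunc_exp N.+1 v)`_t = (trunc_exp N.+1 (u + v))`_t.
Proof.
move=> leN; apply: (mulfI (natr_fact_neq0 t)); rewrite coef_trunc_expM coef_trunc_exp ltnS leN.
rewrite mulrC divfK ?natr_fact_neq0 // exprD_binom_term big_mkcond /=.
by apply: eq_bigr => j _; rewrite ifT //; have := ltn_ord j; lia.
Qed.

Definition nneg_coefs P := forall t, 0 <= P`_t.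

Definition coefs_le N P Q := forall t, (t <= N)%N -> P`_t <= Q`_t.

Lemma nneg_coefs_trunc_exp r x : 0 <= x -> nneg_coefs (trunc_exp r x).
Proof. by move=> x0 t; rewrite coef_trunc_exp; case: ifP; rewrite // divr_ge0 ?exprn_ge0. Qed.

Lemma nneg_coefsM P Q : nneg_coefs P -> nneg_coefs Q -> nneg_coefs (P * Q).
Proof. by move=> P0 Q0 t; rewrite coefM sumr_ge0 // => j _; rewrite mulr_ge0. Qed.

Lemma nneg_coefs_prod (I : finType) (F : I -> {poly R}) :
  (forall i, nneg_coefs (F i)) -> nneg_coefs (\prod_i F i).
Proof.
move=> F0; apply: big_ind => //; last exact: nneg_coefsM.
by move=> t; rewrite coef1; case: (t == 0)%N.
Qed.

Lemma coefs_le_refl N P : coefs_le N P P.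
Proof. by []. Qed.

Lemma coefs_le_trans N P Q S : coefs_le N P Q -> coefs_le N Q S -> coefs_le N P S.
Proof. by move=> PQ QS t leN; apply: le_trans (PQ t leN) (QS t leN). Qed.

Lemma coefs_leM N P P' Q Q' : nneg_coefs P -> nneg_coefs Q ->
  coefs_le N P P' -> coefs_le N Q Q' -> coefs_le N (P * Q) (P' * Q').
Proof.
move=> P0 Q0 PP' QQ' t leN; rewrite !coefM; apply: ler_sum => j _.
by rewrite ler_pM // ?PP' ?QQ' //; have := ltn_ord j; lia.
Qed.

Lemma coef_trunc_exp_head k N t c d : (t <= N)%N ->
  t`!%:R * (trunc_exp k c * trunc_exp N.+1 d)`_t = binom_head k t c d.
Proof.
move=> leN; rewrite coef_trunc_expM binom_headE.
by apply: eq_bigl => j; have := ltn_ord j; case: (j < k)%N => /=; lia.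
Qed.

Lemma trunc_exp_merge k N x y c : (0 < k)%N -> 0 <= x -> 0 <= y -> 0 <= c ->
  c ^+ k = x ^+ k + y ^+ k ->
  coefs_le N (trunc_exp k x * trunc_exp k y) (trunc_exp k c * trunc_exp N.+1 (x + y - c)).
Proof.
move=> k_gt0 x0 y0 c0 ck t leN.
rewrite -(ler_pM2l (_ : 0 < t`!%:R)) ?ltr0n ?fact_gt0 // coef_trunc_exp_head //.
by rewrite coef_trunc_expM; apply: binom_two_sided_le_head.
Qed.

End TruncatedExponential.

Section KNorm.
Variable R : realType.
Variables (m k : nat) (p : 'I_m -> R).
Hypotheses (k_gt0 : (0 < k)%N) (p_ge0 : forall i, 0 <= p i).

Lemma knorm_ge0 : 0 <= knorm p k.
Proof. exact: powR_ge0. Qed.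

Lemma knorm_expr : knorm p k ^+ k = \sum_i p i ^+ k.
Proof.
rewrite /knorm -powR_mulrn ?powR_ge0 // -powRrM mulVf ?powRr1 ?pnatr_eq0 -?lt0n //.
by rewrite sumr_ge0 // => i _; rewrite exprn_ge0.
Qed.

Lemma knorm_le_sum : knorm p k <= \sum_i p i.
Proof.
rewrite -(ler_pXn2r k_gt0) ?nnegrE ?knorm_ge0 ?sumr_ge0 // knorm_expr.
exact: sumX_le_exprsum.
Qed.

End KNorm.

Lemma prod_trunc_exp_le (R : realType) k N m (p : 'I_m -> R) :
  (0 < k)%N -> (forall i, 0 <= p i) ->
  coefs_le N (\prod_i trunc_exp k (p i))
    (trunc_exp k (knorm p k) * trunc_exp N.+1 (\sum_i p i - knorm p k)).
Proof.
move=> k_gt0; elim: m p => [|m IH] p p0.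
  have -> : knorm p k = 0 by rewrite /knorm big_ord0 powR0 // invr_eq0 pnatr_eq0 -lt0n.
  by rewrite big_ord0 big_ord0 subrr !trunc_exp0 // mulr1; apply: coefs_le_refl.
pose q i := p (widen_ord (leqnSn m) i); have q0 i : 0 <= q i by apply: p0.
set y := p ord_max; set c := knorm q k; set c' := knorm p k; set s := \sum_i q i.
have ck : c' ^+ k = c ^+ k + y ^+ k by rewrite !knorm_expr // big_ord_recr.
have c0 : 0 <= c by exact: knorm_ge0.
have c'0 : 0 <= c' by exact: knorm_ge0.
have [_ _ ley] := root_sum_bounds k_gt0 c0 (p0 _) c'0 ck.
have sc0 : 0 <= s - c by rewrite subr_ge0; apply: knorm_le_sum.
have d0 : 0 <= c + y - c' by rewrite subr_ge0.
have merge_last : coefs_le N (\prod_i trunc_exp k (q i) * trunc_exp k y)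
    (trunc_exp k c * trunc_exp k y * trunc_exp N.+1 (s - c)).
  rewrite mulrAC; apply: coefs_leM (IH q q0) (coefs_le_refl _).
    by apply: nneg_coefs_prod => i; apply/nneg_coefs_trunc_exp.
  exact/nneg_coefs_trunc_exp/p0.
have merge_norms : coefs_le N (trunc_exp k c * trunc_exp k y * trunc_exp N.+1 (s - c))
    (trunc_exp k c' * (trunc_exp N.+1 (c + y - c') * trunc_exp N.+1 (s - c))).
  rewrite mulrA; apply: coefs_leM (trunc_exp_merge k_gt0 c0 (p0 _) c'0 ck) (coefs_le_refl _).
    exact: nneg_coefsM (nneg_coefs_trunc_exp _ c0) (nneg_coefs_trunc_exp _ (p0 _)).
  exact/nneg_coefs_trunc_exp.
rewrite big_ord_recr [X in trunc_exp _ (X - _)]big_ord_recr /= -/s.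
apply: coefs_le_trans merge_last (coefs_le_trans merge_norms _).
apply: coefs_leM (coefs_le_refl _) _; first exact/nneg_coefs_trunc_exp.
  exact: nneg_coefsM (nneg_coefs_trunc_exp _ d0) (nneg_coefs_trunc_exp _ sc0).
by move=> t leN; rewrite coef_trunc_expMD // (_ : c + y - c' + (s - c) = s + y - c') //; ring.
Qed.

Lemma prodr_natr_bool (R : comPzSemiRingType) (I : finType) (b : pred I) :
  \prod_i (b i)%:R = [forall i, b i]%:R :> R.
Proof.
have [/forallP bT|/forallPn[i /negbTE bi]] := boolP [forall i, b i].
  by rewrite big1 // => i _; rewrite bT.
by rewrite (bigD1 i) //= bi mul0r.
Qed.

Section LoadsGeneratingFunction.
Variables (R : realType) (m : nat) (p : 'I_m -> R).

Definition prob_loads_lt n (r : 'I_m -> nat) : R :=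
  \sum_(f : {ffun 'I_n -> 'I_m} | [forall i, load f i < r i]%N) outcome_prob p f.

Definition loads_egf (r : 'I_m -> nat) : {poly R} := \prod_i trunc_exp (r i) (p i).

Definition decr_at (r : 'I_m -> nat) i : 'I_m -> nat :=
  fun i' => if i' == i then (r i).-1 else r i'.

Lemma deriv_loads_egf r : (loads_egf r)^`() = \sum_i p i *: loads_egf (decr_at r i).
Proof.
rewrite /loads_egf deriv_prod; apply: eq_bigr => i _.
rewrite deriv_trunc_exp [in RHS](bigD1 i) //= /decr_at eqxx -scalerAl.
by congr (_ *: (_ * _)); apply: eq_bigr => j /negbTE ->.
Qed.

Lemma coef_loads_egfS n r : n.+1`!%:R * (loads_egf r)`_n.+1 =
  \sum_i p i * (n`!%:R * (loads_egf (decr_at r i))`_n).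
Proof.
have -> : n.+1`!%:R * (loads_egf r)`_n.+1 = n`!%:R * (loads_egf r)^`()`_n.
  by rewrite coef_deriv factS natrM -mulr_natr; ring.
rewrite deriv_loads_egf coef_sum mulr_sumr.
by apply: eq_bigr => i _; rewrite coefZ mulrCA.
Qed.

Lemma prob_loads_lt0 r : prob_loads_lt 0 r = (loads_egf r)`_0.
Proof.
have load0 (f : {ffun 'I_0 -> 'I_m}) i : load f i = 0%N.
  by apply/eqP; rewrite -leqn0 (leq_trans (max_card _)) ?card_ord.
rewrite /prob_loads_lt [LHS](eq_bigl (fun=> [forall i, 0 < r i]%N)) => [|f]; last first.
  by apply/eq_forallb => i; rewrite load0.
rewrite /loads_egf coef0_prod.
have [/forallP r_gt0|/forallPn[i /negbTE r_i0]] := boolP [forall i, 0 < r i]%N.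
  rewrite [RHS]big1 => [|i _]; last by rewrite coef_trunc_exp r_gt0 expr0 fact0 divr1.
  rewrite (eq_bigr (fun=> 1)) => [|f _]; last by rewrite /outcome_prob big_ord0.
  by rewrite sumr_const card_ffun !card_ord expn0.
by rewrite big_pred0 // (bigD1 i) //= coef_trunc_exp r_i0 mul0r.
Qed.

Definition ffun_cons n (i : 'I_m) (g : {ffun 'I_n -> 'I_m}) : {ffun 'I_n.+1 -> 'I_m} :=
  [ffun j => if unlift ord0 j is Some j' then g j' else i].

Definition ffun_behead n (f : {ffun 'I_n.+1 -> 'I_m}) : {ffun 'I_n -> 'I_m} :=
  [ffun j => f (lift ord0 j)].

Lemma ffun_cons0 n i g : @ffun_cons n i g ord0 = i.
Proof. by rewrite ffunE unlift_none. Qed.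

Lemma ffun_consS n i g j : @ffun_cons n i g (lift ord0 j) = g j.
Proof. by rewrite ffunE liftK. Qed.

Lemma ffun_cons_bij n : bijective (fun ig => @ffun_cons n ig.1 ig.2).
Proof.
exists (fun f : {ffun 'I_n.+1 -> 'I_m} => (f ord0, ffun_behead f)) => [[i g]|f] /=.
  by rewrite ffun_cons0; congr (_, _); apply/ffunP => j; rewrite ffunE ffun_consS.
by apply/ffunP => j; rewrite ffunE; case: unliftP => [j' ->|->]; rewrite ?ffunE.
Qed.

Lemma load_ffun_cons n i g i' : load (@ffun_cons n i g) i' = (load g i' + (i == i'))%N.
Proof.
rewrite /load -!sum1dep_card big_mkcond [in RHS]big_mkcond /= big_ord_recl ffun_cons0.
by rewrite addnC; congr (_ + _)%N; apply: eq_bigr => j _; rewrite ffun_consS.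
Qed.

Lemma prob_loads_ltS n r :
  prob_loads_lt n.+1 r = \sum_i p i * prob_loads_lt n (decr_at r i).
Proof.
rewrite /prob_loads_lt (reindex _ (onW_bij _ (ffun_cons_bij n))) /=.
under eq_bigl => ig.
  rewrite (eq_forallb (fun i' => _ : _ = (load ig.2 i' < decr_at r ig.1 i')%N)).
    over.
  by move=> i'; rewrite load_ffun_cons /decr_at eq_sym; case: eqP => [->|_]; lia.
rewrite -(pair_big_dep xpredT (fun i g => [forall i', load g i' < decr_at r i i']%N)
  (fun i g => outcome_prob p (@ffun_cons n i g))) /=.
apply: eq_bigr => i _; rewrite mulr_sumr; apply: eq_bigr => g _.
by rewrite /outcome_prob big_ord_recl ffun_cons0; under eq_bigr do rewrite ffun_consS.
Qed.

(* Conditioning on the bin of the first ball is differentiation of [loads_egf]. *)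
Lemma prob_loads_ltE n r : prob_loads_lt n r = n`!%:R * (loads_egf r)`_n.
Proof.
elim: n r => [|n IH] r; first by rewrite prob_loads_lt0 fact0 mul1r.
by rewrite prob_loads_ltS coef_loads_egfS; under eq_bigr do rewrite IH.
Qed.

End LoadsGeneratingFunction.

Section MaxLoad.
Variables (R : realType) (n m k : nat) (p : 'I_m -> R).
Hypotheses (k_gt0 : (0 < k)%N) (p_ge0 : forall i, 0 <= p i) (p_sum1 : \sum_i p i = 1).

Lemma maxload_ltE (f : {ffun 'I_n -> 'I_m}) :
  (maxload f < k)%N = [forall i, load f i < k]%N.
Proof.
apply/idP/forallP => [lt_max i|lt_load]; first exact: leq_ltn_trans (leq_bigmax _) lt_max.
have : (maxload f <= k.-1)%N by apply/bigmax_leqP => i _; have := lt_load i; lia.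
lia.
Qed.

Lemma sum_outcome_prob : \sum_(f : {ffun 'I_n -> 'I_m}) outcome_prob p f = 1.
Proof.
rewrite -(bigA_distr_bigA (fun (_ : 'I_n) i => p i)) /=.
by rewrite big1 // => j _; rewrite p_sum1.
Qed.

Lemma prob_maxload_geE : prob_maxload_ge n p k = 1 - prob_loads_lt p n (fun=> k).
Proof.
have -> : prob_loads_lt p n (fun=> k) =
    \sum_(f : {ffun 'I_n -> 'I_m} | ~~ (k <= maxload f)%N) outcome_prob p f.
  by apply: eq_bigl => f; rewrite -maxload_ltE ltnNge.
by rewrite -sum_outcome_prob (bigID (fun f => k <= maxload f)%N) addrK.
Qed.

Lemma prob_bin_contains (K : {set 'I_n}) i :
  \sum_(f : {ffun 'I_n -> 'I_m}) outcome_prob p f * [forall j in K, f j == i]%:R =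
  p i ^+ #|K|.
Proof.
have split_prod f : outcome_prob p f * [forall j in K, f j == i]%:R =
    \prod_j (p (f j) * ((j \in K) ==> (f j == i))%:R).
  by rewrite big_split /= prodr_natr_bool.
under eq_bigr do rewrite split_prod.
rewrite -(bigA_distr_bigA (fun j i' => p i' * ((j \in K) ==> (i' == i))%:R)) /=.
rewrite (bigID (mem K)) /= -[RHS]mulr1 -prodr_const; congr (_ * _).
  apply: eq_bigr => j jK; rewrite (bigD1 i) //= jK eqxx mulr1 big1 ?addr0 // => i' /negbTE.
  by move->; rewrite mulr0.
by apply: big1 => j /negbTE jK; rewrite -[RHS]p_sum1; apply: eq_bigr => i' _; rewrite jK mulr1.
Qed.

Definition ksets_in_one_bin (f : {ffun 'I_n -> 'I_m}) : R :=
  \sum_(K : {set 'I_n} | #|K| == k) \sum_i [forall j in K, f j == i]%:R.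

Lemma ksets_in_one_bin_ge0 f : 0 <= ksets_in_one_bin f.
Proof. by rewrite sumr_ge0 // => K _; rewrite sumr_ge0. Qed.

Lemma ksets_in_one_bin_ge1 f : (k <= maxload f)%N -> 1 <= ksets_in_one_bin f.
Proof.
rewrite leqNgt maxload_ltE => /forallPn[i]; rewrite -leqNgt => le_load.
pose K := [set j in take k (enum [set j | f j == i])].
have cardK : #|K| == k.
  rewrite cardsE (card_uniqP _) ?take_uniq ?enum_uniq // size_takel //.
  by rewrite -cardE.
have fK : [forall j in K, f j == i].
  by apply/forall_inP => j; rewrite inE => /mem_take; rewrite mem_enum inE.
rewrite /ksets_in_one_bin (bigD1 K) //= (bigD1 i) //= fK -addrA lerDl.
by rewrite addr_ge0 ?sumr_ge0 // => K' _; rewrite sumr_ge0.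
Qed.

Lemma prob_maxload_ge_le : prob_maxload_ge n p k <= 'C(n, k)%:R * \sum_i p i ^+ k.
Proof.
apply: (@le_trans _ _ (\sum_f outcome_prob p f * ksets_in_one_bin f)).
  rewrite [X in X <= _]big_mkcond; apply: ler_sum => f _.
  have outcome_ge0 : 0 <= outcome_prob p f by apply: prodr_ge0.
  case: ifP => [le_max|_]; last by rewrite mulr_ge0 ?ksets_in_one_bin_ge0.
  by rewrite -[X in X <= _]mulr1 ler_wpM2l ?ksets_in_one_bin_ge1.
under eq_bigr do rewrite mulr_sumr.
rewrite exchange_big /= (eq_bigr (fun=> \sum_i p i ^+ k)) => [|K /eqP cardK].
  rewrite (eq_bigl (fun K => K \in [set K : {set 'I_n} | #|K| == k])) => [|K]; last first.
    by rewrite inE.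
  by rewrite sumr_const card_draws card_ord mulr_natl.
under eq_bigr do rewrite mulr_sumr.
by rewrite exchange_big; apply: eq_bigr => i _; rewrite prob_bin_contains cardK.
Qed.

End MaxLoad.

Theorem theorem1 (R : realType) (n m k : nat) (p : 'I_m -> R)
  (hm : (1 <= m)%N) (hk : (1 <= k)%N)
  (hp0 : forall i, 0 <= p i) (hp1 : \sum_(i < m) p i = 1) :
  binom_tail_ge n (knorm p k) k <= prob_maxload_ge n p k /\
  prob_maxload_ge n p k <= ('C(n, k))%:R * knorm p k ^+ k.
Proof.
split; last by rewrite knorm_expr //; exact: prob_maxload_ge_le.
set c := knorm p k.
have loads_lt_le : prob_loads_lt p n (fun=> k) <= binom_head k n c (1 - c).
  rewrite prob_loads_ltE -(coef_trunc_exp_head _ _ _ (leqnn n)) ler_wpM2l //.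
  by have := prod_trunc_exp_le (N := n) hk hp0; rewrite hp1; apply.
have := binom_head_add_tail k n c (1 - c); rewrite (addrC c) subrK expr1n.
rewrite prob_maxload_geE // /binom_tail_ge; lra.
Qed.
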